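(* Let $C_p,C_m>0$ and $T_p,T_m\in(0,1)$ with $T_p\ne T_m$, and let $P(k)=C_pT_p^k-C_mT_m^k$ for real $k$. Then $P$ has exactly one point of abscissa intersection $k^{(0)}$, exactly one extremum $k^{(1)}$ and exactly one inflection point $k^{(2)}$, and $k^{(0)}<k^{(1)}<k^{(2)}$. If $T_p>T_m$ (high pair function), the extremum is a maximum, $P$ is monotonically increasing to the left of its maximum and monotonically decreasing to the right of it, $P$ is concave to the left of its inflection point and convex to the right of it, $P(k)>0$ for $k>k^{(0)}$ and $P(k)<0$ for $k<k^{(0)}$, $P(k)\to 0$ from above as $k\to\infty$, and $P(k)\to-\infty$ as $k\to-\infty$. If $T_p<T_m$ (low pair function), the extremum is a minimum, $P$ is monotonically decreasing to the left of its minimum and monotonically increasing to the right of it, $P$ is convex to the left of its inflection point and concave to the right of it, $P(k)<0$ for $k>k^{(0)}$, $P(k)\to 0$ from below as $k\to\infty$, and $P(k)\to+\infty$ as $k\to-\infty$. Moreover, every derivative $P^{(n)}$, $n\ge 1$, has exactly one zero.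
   Context: A pair function is $P(k)=C_pT_p^k-C_mT_m^k$ with $C_p,C_m>0$ and $T_p,T_m\in(0,1)$. It is a high pair function (HPF) if $T_p>T_m$ and a low pair function (LPF) if $T_p<T_m$. *)

From Stdlib Require Import Reals.
From Coquelicot Require Import Coquelicot.
Open Scope R_scope.

Definition pair_fun (Cp Cm Tp Tm : R) (k : R) : R :=
  Cp * Rpower Tp k - Cm * Rpower Tm k.

Definition strictly_increasing_on (f : R -> R) (I : R -> Prop) : Prop :=
  forall x y, I x -> I y -> x < y -> f x < f y.
Definition strictly_decreasing_on (f : R -> R) (I : R -> Prop) : Prop :=
  forall x y, I x -> I y -> x < y -> f y < f x.

Definition strictly_convex_on (f : R -> R) (I : R -> Prop) : Prop :=
  forall x y t, I x -> I y -> x <> y -> 0 < t < 1 ->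
    f (t * x + (1 - t) * y) < t * f x + (1 - t) * f y.
Definition strictly_concave_on (f : R -> R) (I : R -> Prop) : Prop :=
  forall x y t, I x -> I y -> x <> y -> 0 < t < 1 ->
    t * f x + (1 - t) * f y < f (t * x + (1 - t) * y).

Definition is_local_max (f : R -> R) (k : R) : Prop :=
  exists eps, 0 < eps /\ forall y, Rabs (y - k) < eps -> f y <= f k.
Definition is_local_min (f : R -> R) (k : R) : Prop :=
  exists eps, 0 < eps /\ forall y, Rabs (y - k) < eps -> f k <= f y.
Definition is_local_extremum (f : R -> R) (k : R) : Prop :=
  is_local_max f k \/ is_local_min f k.

Definition is_inflection_point (f : R -> R) (k : R) : Prop :=
  exists eps, 0 < eps /\
    ((strictly_convex_on f (fun x => k - eps < x <= k) /\
      strictly_concave_on f (fun x => k <= x < k + eps)) \/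
     (strictly_concave_on f (fun x => k - eps < x <= k) /\
      strictly_convex_on f (fun x => k <= x < k + eps))).

From Stdlib Require Import Reals Lra FunctionalExtensionality.
From Coquelicot Require Import Coquelicot.
Open Scope R_scope.

(* With a = ln Tp and b = ln Tm (both negative), the n-th derivative of P is
   Cp a^n e^(k a) - Cm b^n e^(k b) = Cp a^n e^(k b) (e^(k (a - b)) - e^(z_n (a - b))),
   where z_n = ln (Cm b^n / (Cp a^n)) / (a - b).  So P^(n) vanishes only at z_n and changes
   sign there, with the sign of a^n (a - b) (k - z_n); moreover z_(n+1) - z_n = ln (b/a) / (a - b)
   is positive.  For a high pair function the signs of P, P' and P'' around z_0 < z_1 < z_2
   give its whole shape, and a low pair function is minus the high pair function obtained
   by exchanging the two terms. *)

Lemma mul_exp_sub_pos d x y : d <> 0 -> x < y -> 0 < d * (exp (y * d) - exp (x * d)).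
Proof.
  intros Hd Hxy; destruct (Rdichotomy _ _ Hd) as [Hneg|Hpos].
  - assert (exp (y * d) < exp (x * d)) by (apply exp_increasing; nra); nra.
  - assert (exp (x * d) < exp (y * d)) by (apply exp_increasing; nra); nra.
Qed.

Lemma is_lim_mul_const (x : Rbar) (d : R) (l : Rbar) :
  is_Rbar_mult x d l -> is_lim (fun k => k * d) x l.
Proof.
  intros H; apply is_Rbar_mult_unique in H as <-.
  apply is_lim_scal_r, is_lim_id.
Qed.

Lemma is_lim_exp_mul_0 (x : Rbar) (d : R) :
  is_Rbar_mult x d m_infty -> is_lim (fun k => exp (k * d)) x 0.
Proof.
  intros H; apply (is_lim_comp exp (fun k => k * d) x 0 m_infty).
  - exact is_lim_exp_m.
  - now apply is_lim_mul_const.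
  - now apply filter_forall.
Qed.

Lemma is_lim_exp_mul_p_infty (x : Rbar) (d : R) :
  is_Rbar_mult x d p_infty -> is_lim (fun k => exp (k * d)) x p_infty.
Proof.
  intros H; apply (is_lim_comp exp (fun k => k * d) x p_infty p_infty).
  - exact is_lim_exp_p.
  - now apply is_lim_mul_const.
  - now apply filter_forall.
Qed.

Lemma filterlim_at_right_of_is_lim (f : R -> R) (x : Rbar) :
  is_lim f x 0 -> Rbar_locally' x (fun k => 0 < f k) ->
  filterlim f (Rbar_locally' x) (at_right 0).
Proof.
  intros Hlim Hpos.
  apply (filterlim_ext_loc (fun k => Rabs (f k))).
  - apply (filter_imp (fun k => 0 < f k)); [|exact Hpos].
    intros k Hk; apply Rabs_right; lra.
  - apply is_lim_Rabs_0; [exact Hlim|].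
    apply (filter_imp (fun k => 0 < f k)); [|exact Hpos].
    intros k Hk; lra.
Qed.

Lemma filterlim_opp_at_right {T} {F : (T -> Prop) -> Prop} {FF : Filter F} (f : T -> R) :
  filterlim f F (at_right 0) -> filterlim (fun k => - f k) F (at_left 0).
Proof.
  intros Hf; eapply filterlim_comp; [exact Hf|].
  pose proof (filterlim_Ropp_right 0) as Hopp; rewrite Ropp_0 in Hopp; exact Hopp.
Qed.

Lemma strictly_increasing_of_derive (f df : R -> R) (I : R -> Prop) :
  (forall x, is_derive f x (df x)) ->
  (forall x y c, I x -> I y -> x < c < y -> 0 < df c) ->
  strictly_increasing_on f I.
Proof.
  intros Hd Hpos x y Ix Iy Hxy.
  destruct (MVT_cor2 f df x y Hxy) as [c [Hmvt Hc]];
    [intros; apply is_derive_Reals, Hd|].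
  specialize (Hpos x y c Ix Iy Hc); nra.
Qed.

Lemma strictly_increasing_on_opp (f : R -> R) (I : R -> Prop) :
  strictly_increasing_on (fun x => - f x) I <-> strictly_decreasing_on f I.
Proof. split; intros H x y Ix Iy Hxy; specialize (H x y Ix Iy Hxy); lra. Qed.

Lemma strictly_decreasing_on_opp (f : R -> R) (I : R -> Prop) :
  strictly_decreasing_on (fun x => - f x) I <-> strictly_increasing_on f I.
Proof. split; intros H x y Ix Iy Hxy; specialize (H x y Ix Iy Hxy); lra. Qed.

Lemma strictly_decreasing_of_derive (f df : R -> R) (I : R -> Prop) :
  (forall x, is_derive f x (df x)) ->
  (forall x y c, I x -> I y -> x < c < y -> df c < 0) ->
  strictly_decreasing_on f I.
Proof.
  intros Hd Hneg; apply strictly_increasing_on_opp.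
  apply (strictly_increasing_of_derive _ (fun x => - df x)).
  - intros x; apply (is_derive_opp f x (df x)), Hd.
  - intros x y c Ix Iy Hc; specialize (Hneg x y c Ix Iy Hc); lra.
Qed.

Lemma strictly_convex_on_opp (f : R -> R) (I : R -> Prop) :
  strictly_convex_on (fun x => - f x) I <-> strictly_concave_on f I.
Proof. split; intros H x y t Ix Iy Hxy Ht; specialize (H x y t Ix Iy Hxy Ht); lra. Qed.

Lemma strictly_concave_on_opp (f : R -> R) (I : R -> Prop) :
  strictly_concave_on (fun x => - f x) I <-> strictly_convex_on f I.
Proof. split; intros H x y t Ix Iy Hxy Ht; specialize (H x y t Ix Iy Hxy Ht); lra. Qed.

Lemma strictly_convex_on_subset (f : R -> R) (I J : R -> Prop) :
  (forall x, J x -> I x) -> strictly_convex_on f I -> strictly_convex_on f J.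
Proof. intros HJ H x y t Jx Jy; apply H; auto. Qed.

Lemma strictly_convex_on_intro (f : R -> R) (I : R -> Prop) :
  (forall x y t, I x -> I y -> x < y -> 0 < t < 1 ->
     f (t * x + (1 - t) * y) < t * f x + (1 - t) * f y) ->
  strictly_convex_on f I.
Proof.
  intros H x y t Ix Iy Hxy Ht.
  destruct (Rdichotomy _ _ Hxy) as [Hlt|Hgt]; [auto|].
  replace (t * x + (1 - t) * y) with ((1 - t) * y + (1 - (1 - t)) * x) by ring.
  replace (t * f x + (1 - t) * f y) with ((1 - t) * f y + (1 - (1 - t)) * f x) by ring.
  apply H; auto; lra.
Qed.

Definition is_interval (I : R -> Prop) : Prop :=
  forall x y w, I x -> I w -> x <= y <= w -> I y.

(* Two mean value theorems, on [x, w] and [w, y], compare the chord slopes. *)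
Lemma strictly_convex_of_increasing_derive (f df : R -> R) (I : R -> Prop) :
  (forall x, is_derive f x (df x)) -> is_interval I ->
  strictly_increasing_on df I -> strictly_convex_on f I.
Proof.
  intros Hd HI Hinc; apply strictly_convex_on_intro; intros x y t Ix Iy Hxy Ht.
  set (w := t * x + (1 - t) * y).
  assert (Hxw : x < w) by (unfold w; nra).
  assert (Hwy : w < y) by (unfold w; nra).
  destruct (MVT_cor2 f df x w Hxw) as [c1 [E1 Hc1]]; [intros; apply is_derive_Reals, Hd|].
  destruct (MVT_cor2 f df w y Hwy) as [c2 [E2 Hc2]]; [intros; apply is_derive_Reals, Hd|].
  assert (Hslopes : df c1 < df c2) by (apply Hinc; [apply (HI x _ y)|apply (HI x _ y)|]; auto; lra).
  assert (Hw1 : w - x = (1 - t) * (y - x)) by (unfold w; ring).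
  assert (Hw2 : y - w = t * (y - x)) by (unfold w; ring).
  rewrite Hw1 in E1; rewrite Hw2 in E2.
  assert (0 < t * (1 - t) * (y - x)) by (apply Rmult_lt_0_compat; [nra|lra]).
  nra.
Qed.

Lemma strictly_concave_of_decreasing_derive (f df : R -> R) (I : R -> Prop) :
  (forall x, is_derive f x (df x)) -> is_interval I ->
  strictly_decreasing_on df I -> strictly_concave_on f I.
Proof.
  intros Hd HI Hdec; apply strictly_convex_on_opp.
  apply (strictly_convex_of_increasing_derive _ (fun x => - df x)); auto.
  - intros x; apply (is_derive_opp f x (df x)), Hd.
  - apply strictly_increasing_on_opp, Hdec.
Qed.

Lemma is_local_extremum_opp (f : R -> R) k :
  is_local_extremum (fun x => - f x) k <-> is_local_extremum f k.
Proof.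
  unfold is_local_extremum, is_local_max, is_local_min.
  split; intros [[eps [Heps H]]|[eps [Heps H]]];
    [right|left|right|left]; exists eps; split; auto;
    intros y Hy; specialize (H y Hy); lra.
Qed.

Lemma is_local_max_of_increasing_decreasing (f : R -> R) c :
  strictly_increasing_on f (fun k => k <= c) ->
  strictly_decreasing_on f (fun k => c <= k) -> is_local_max f c.
Proof.
  intros Hinc Hdec; exists 1; split; [lra|]; intros y _.
  destruct (Rtotal_order y c) as [Hlt|[->|Hgt]].
  - left; apply Hinc; lra.
  - lra.
  - left; apply Hdec; lra.
Qed.

Lemma not_local_extremum_of_between (f : R -> R) k :
  (forall eps, 0 < eps -> exists y1 y2,
     Rabs (y1 - k) < eps /\ Rabs (y2 - k) < eps /\ f y1 < f k < f y2) ->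
  ~ is_local_extremum f k.
Proof.
  intros Hbetween [[eps [Heps Hmax]]|[eps [Heps Hmin]]];
    destruct (Hbetween eps Heps) as (y1 & y2 & Hy1 & Hy2 & Hf).
  - specialize (Hmax y2 Hy2); lra.
  - specialize (Hmin y1 Hy1); lra.
Qed.

Lemma local_extremum_iff (f : R -> R) c :
  strictly_increasing_on f (fun k => k <= c) ->
  strictly_decreasing_on f (fun k => c <= k) ->
  forall k, is_local_extremum f k <-> k = c.
Proof.
  intros Hinc Hdec k; split;
    [|intros ->; left; apply is_local_max_of_increasing_decreasing; assumption].
  intros Hext; destruct (Rtotal_order k c) as [Hlt|[Heq|Hgt]]; [exfalso| |exfalso];
    [|assumption|]; revert Hext; apply not_local_extremum_of_between; intros eps Heps.
  - set (d := Rmin eps (c - k) / 2).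
    assert (0 < d /\ d < eps /\ d < c - k) by (unfold d, Rmin; destruct Rle_dec; lra).
    exists (k - d), (k + d).
    rewrite Rabs_left, Rabs_right by lra.
    repeat split; try lra; apply Hinc; lra.
  - set (d := Rmin eps (k - c) / 2).
    assert (0 < d /\ d < eps /\ d < k - c) by (unfold d, Rmin; destruct Rle_dec; lra).
    exists (k + d), (k - d).
    rewrite Rabs_right, Rabs_left by lra.
    repeat split; try lra; apply Hdec; lra.
Qed.

Lemma is_inflection_point_opp (f : R -> R) k :
  is_inflection_point (fun x => - f x) k <-> is_inflection_point f k.
Proof.
  unfold is_inflection_point.
  setoid_rewrite strictly_convex_on_opp; setoid_rewrite strictly_concave_on_opp.
  split; intros [eps [Heps [H|H]]]; exists eps; split; tauto.
Qed.

Lemma strictly_convex_concave_absurd (f : R -> R) (I J : R -> Prop) x y :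
  strictly_convex_on f I -> strictly_concave_on f J ->
  I x -> I y -> J x -> J y -> x <> y -> False.
Proof.
  intros Hconv Hconc Ix Iy Jx Jy Hxy.
  specialize (Hconv x y (/ 2) Ix Iy Hxy ltac:(lra)).
  specialize (Hconc x y (/ 2) Jx Jy Hxy ltac:(lra)).
  lra.
Qed.

Lemma not_inflection_point_of_strictly_convex_near (f : R -> R) k e :
  0 < e -> strictly_convex_on f (fun x => k - e < x < k + e) ->
  ~ is_inflection_point f k.
Proof.
  intros He Hconv [eps [Heps Hsides]].
  set (d := Rmin eps e / 2).
  assert (0 < d /\ d < eps /\ d < e) by (unfold d, Rmin; destruct Rle_dec; lra).
  destruct Hsides as [[_ Hconc]|[Hconc _]].
  - apply (strictly_convex_concave_absurd f _ _ k (k + d) Hconv Hconc); simpl; lra.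
  - apply (strictly_convex_concave_absurd f _ _ (k - d) k Hconv Hconc); simpl; lra.
Qed.

Lemma inflection_point_iff (f : R -> R) c :
  strictly_concave_on f (fun k => k <= c) ->
  strictly_convex_on f (fun k => c <= k) ->
  forall k, is_inflection_point f k <-> k = c.
Proof.
  intros Hconc Hconv k; split.
  - intros Hinfl; destruct (Rtotal_order k c) as [Hlt|[Heq|Hgt]]; [exfalso| |exfalso];
      [|assumption|].
    + apply is_inflection_point_opp in Hinfl; revert Hinfl.
      apply (not_inflection_point_of_strictly_convex_near _ k (c - k)); [lra|].
      apply (strictly_convex_on_subset _ (fun x => x <= c)); [intros x Hx; lra|].
      apply strictly_convex_on_opp, Hconc.
    + revert Hinfl; apply (not_inflection_point_of_strictly_convex_near _ k (k - c)); [lra|].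
      apply (strictly_convex_on_subset _ (fun x => c <= x)); [intros x Hx; lra|exact Hconv].
  - intros ->; exists 1; split; [lra|]; right; split.
    + apply strictly_convex_on_opp, (strictly_convex_on_subset _ (fun x => x <= c));
        [intros x Hx; lra|apply strictly_convex_on_opp, Hconc].
    + apply (strictly_convex_on_subset _ (fun x => c <= x)); [intros x Hx; lra|exact Hconv].
Qed.

Definition exp_pair (Cp Cm a b : R) (n : nat) (k : R) : R :=
  Cp * a ^ n * exp (k * a) - Cm * b ^ n * exp (k * b).

Definition exp_pair_root (Cp Cm a b : R) (n : nat) : R :=
  ln (Cm / Cp * (b / a) ^ n) / (a - b).

Lemma pair_fun_exp_pair Cp Cm Tp Tm :
  pair_fun Cp Cm Tp Tm = exp_pair Cp Cm (ln Tp) (ln Tm) 0.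
Proof.
  apply functional_extensionality; intros k.
  unfold pair_fun, exp_pair, Rpower; simpl; ring.
Qed.

Lemma exp_pair_opp_swap Cp Cm a b n :
  exp_pair Cp Cm a b n = (fun k => - exp_pair Cm Cp b a n k).
Proof. apply functional_extensionality; intros k; unfold exp_pair; ring. Qed.

Lemma is_derive_exp_pair Cp Cm a b n k :
  is_derive (exp_pair Cp Cm a b n) k (exp_pair Cp Cm a b (S n) k).
Proof. unfold exp_pair; auto_derive; auto; simpl; ring. Qed.

Lemma Derive_n_exp_pair Cp Cm a b n k :
  Derive_n (exp_pair Cp Cm a b 0) n k = exp_pair Cp Cm a b n k.
Proof.
  revert k; induction n as [|n IH]; intros k; [reflexivity|].
  simpl; rewrite (Derive_ext _ _ _ IH).
  apply is_derive_unique, is_derive_exp_pair.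
Qed.

Lemma ln_lt_0 T : 0 < T < 1 -> ln T < 0.
Proof. intros HT; rewrite <- ln_1; apply ln_increasing; lra. Qed.

Section ExpPair.

Variables Cp Cm a b : R.
Hypotheses (hCp : 0 < Cp) (hCm : 0 < Cm) (ha : a < 0) (hb : b < 0) (hab : a <> b).

Local Notation F := (exp_pair Cp Cm a b).
Local Notation z := (exp_pair_root Cp Cm a b).

Lemma exp_pair_ratio_pos : 0 < b / a.
Proof.
  assert (/ a < 0) by (apply Rinv_lt_0_compat; lra).
  unfold Rdiv; nra.
Qed.

Lemma exp_pair_root_arg_pos n : 0 < Cm / Cp * (b / a) ^ n.
Proof.
  pose proof exp_pair_ratio_pos.
  apply Rmult_lt_0_compat; [apply Rdiv_lt_0_compat|apply pow_lt]; lra.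
Qed.

Lemma exp_pair_factor n k :
  F n k = Cp * a ^ n * exp (k * b) * (exp (k * (a - b)) - exp (z n * (a - b))).
Proof.
  unfold exp_pair_root.
  replace (ln (Cm / Cp * (b / a) ^ n) / (a - b) * (a - b))
    with (ln (Cm / Cp * (b / a) ^ n)) by (field; lra).
  rewrite exp_ln by apply exp_pair_root_arg_pos.
  unfold exp_pair; replace (k * a) with (k * b + k * (a - b)) by ring.
  assert (Hpow : a ^ n * (b / a) ^ n = b ^ n)
    by (rewrite <- Rpow_mult_distr; f_equal; field; lra).
  rewrite exp_plus, <- Hpow; field; lra.
Qed.

Lemma exp_pair_eq_0_iff n k : F n k = 0 <-> k = z n.
Proof.
  rewrite exp_pair_factor; split; [|intros ->; ring].
  intros H0; apply Rmult_integral in H0 as [H0|H0].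
  - exfalso; revert H0; apply Rmult_integral_contrapositive; split;
      [apply Rmult_integral_contrapositive; split; [lra|apply pow_nonzero; lra]|].
    apply Rgt_not_eq, exp_pos.
  - apply (Rmult_eq_reg_r (a - b)); [apply exp_inv; lra|lra].
Qed.

Lemma Derive_n_exp_pair_unique_zero n : exists! k, Derive_n (F 0) n k = 0.
Proof.
  exists (z n); split.
  - rewrite Derive_n_exp_pair; apply exp_pair_eq_0_iff; reflexivity.
  - intros k; rewrite Derive_n_exp_pair; intros Hk; symmetry; apply exp_pair_eq_0_iff, Hk.
Qed.

Lemma exp_pair_sign_factor n k :
  a ^ n * (a - b) * F n k =
  Cp * (a ^ n) ^ 2 * exp (k * b) * ((a - b) * (exp (k * (a - b)) - exp (z n * (a - b)))).
Proof. rewrite exp_pair_factor; ring. Qed.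

Lemma exp_pair_sign_coef_pos n k : 0 < Cp * (a ^ n) ^ 2 * exp (k * b).
Proof.
  apply Rmult_lt_0_compat; [apply Rmult_lt_0_compat|apply exp_pos]; [lra|].
  apply pow2_gt_0, pow_nonzero; lra.
Qed.

Lemma exp_pair_sign_right n k : z n < k -> 0 < a ^ n * (a - b) * F n k.
Proof.
  intros Hk; rewrite exp_pair_sign_factor.
  apply Rmult_lt_0_compat; [apply exp_pair_sign_coef_pos|].
  apply mul_exp_sub_pos; lra.
Qed.

Lemma exp_pair_sign_left n k : k < z n -> a ^ n * (a - b) * F n k < 0.
Proof.
  intros Hk; rewrite exp_pair_sign_factor.
  pose proof (exp_pair_sign_coef_pos n k).
  assert (0 < (a - b) * (exp (z n * (a - b)) - exp (k * (a - b))))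
    by (apply mul_exp_sub_pos; lra).
  nra.
Qed.

Lemma exp_pair_root_succ n : z (S n) = z n + ln (b / a) / (a - b).
Proof.
  unfold exp_pair_root; rewrite <- Rdiv_plus_distr, <- ln_mult.
  - f_equal; f_equal; simpl; ring.
  - apply exp_pair_root_arg_pos.
  - apply exp_pair_ratio_pos.
Qed.

Lemma exp_pair_root_lt_succ n : z n < z (S n).
Proof.
  rewrite exp_pair_root_succ.
  enough (0 < ln (b / a) / (a - b)) by lra.
  pose proof exp_pair_ratio_pos as Hba.
  assert (Hdiv : b / a - 1 = (a - b) / - a) by (field; lra).
  assert (/ - a > 0) by (apply Rinv_0_lt_compat; lra).
  destruct (Rdichotomy _ _ hab) as [Hlt|Hgt].
  - assert (ln (b / a) < 0).
    { rewrite <- ln_1; apply ln_increasing; [lra|].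
      unfold Rdiv in Hdiv; nra. }
    replace (ln (b / a) / (a - b)) with (- ln (b / a) / (b - a)) by (field; lra).
    apply Rdiv_lt_0_compat; lra.
  - assert (0 < ln (b / a)).
    { rewrite <- ln_1; apply ln_increasing; [lra|].
      unfold Rdiv in Hdiv; nra. }
    apply Rdiv_lt_0_compat; lra.
Qed.

Lemma is_lim_exp_pair_p_infty n : is_lim (F n) p_infty 0.
Proof.
  assert (Hlim : forall d, d < 0 -> is_lim (fun k => exp (k * d)) p_infty 0)
    by (intros d Hd; apply is_lim_exp_mul_0, is_Rbar_mult_p_infty_neg; simpl; lra).
  eapply is_lim_minus; [apply is_lim_scal_l, Hlim, ha|apply is_lim_scal_l, Hlim, hb|].
  unfold is_Rbar_minus, is_Rbar_plus; simpl; do 2 f_equal; ring.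
Qed.

Lemma exp_pair_root_swap n : exp_pair_root Cm Cp b a n = z n.
Proof.
  unfold exp_pair_root.
  replace (Cp / Cm * (a / b) ^ n) with (/ (Cm / Cp * (b / a) ^ n)).
  - rewrite ln_Rinv by apply exp_pair_root_arg_pos; field; lra.
  - replace (a / b) with (/ (b / a)) by (field; lra).
    rewrite pow_inv; field; split; [apply pow_nonzero, Rgt_not_eq, exp_pair_ratio_pos|lra].
Qed.

End ExpPair.

Definition high_pair_shape (P : R -> R) (k0 k1 k2 : R) : Prop :=
  is_local_max P k1 /\
  strictly_increasing_on P (fun k => k <= k1) /\
  strictly_decreasing_on P (fun k => k1 <= k) /\
  strictly_concave_on P (fun k => k <= k2) /\
  strictly_convex_on P (fun k => k2 <= k) /\
  (forall k, k0 < k -> 0 < P k) /\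
  (forall k, k < k0 -> P k < 0) /\
  filterlim P (Rbar_locally p_infty) (at_right 0) /\
  is_lim P m_infty m_infty.

Definition low_pair_shape (P : R -> R) (k0 k1 k2 : R) : Prop :=
  is_local_min P k1 /\
  strictly_decreasing_on P (fun k => k <= k1) /\
  strictly_increasing_on P (fun k => k1 <= k) /\
  strictly_convex_on P (fun k => k <= k2) /\
  strictly_concave_on P (fun k => k2 <= k) /\
  (forall k, k0 < k -> P k < 0) /\
  filterlim P (Rbar_locally p_infty) (at_left 0) /\
  is_lim P m_infty p_infty.

Lemma low_pair_shape_opp P k0 k1 k2 :
  high_pair_shape P k0 k1 k2 -> low_pair_shape (fun k => - P k) k0 k1 k2.
Proof.
  intros (Hmax & Hinc & Hdec & Hconc & Hconv & Hpos & _ & Hright & Hlim).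
  split; [|split; [|split; [|split; [|split; [|split; [|split]]]]]].
  - destruct Hmax as [eps [Heps Hmax]]; exists eps; split; [assumption|].
    intros y Hy; specialize (Hmax y Hy); lra.
  - apply strictly_decreasing_on_opp, Hinc.
  - apply strictly_increasing_on_opp, Hdec.
  - apply strictly_convex_on_opp, Hconc.
  - apply strictly_concave_on_opp, Hconv.
  - intros k Hk; specialize (Hpos k Hk); lra.
  - apply filterlim_opp_at_right, Hright.
  - exact (is_lim_opp P m_infty m_infty Hlim).
Qed.

Lemma high_pair_shape_critical_points P k0 k1 k2 :
  high_pair_shape P k0 k1 k2 ->
  (forall k, is_local_extremum P k <-> k = k1) /\
  (forall k, is_inflection_point P k <-> k = k2).
Proof.
  intros (_ & Hinc & Hdec & Hconc & Hconv & _).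
  split; [apply local_extremum_iff|apply inflection_point_iff]; assumption.
Qed.

Section HighPair.

Variables Cp Cm a b : R.
Hypotheses (hCp : 0 < Cp) (hCm : 0 < Cm) (hba : b < a) (ha : a < 0).

Let hb : b < 0.
Proof. lra. Qed.

Let hab : a <> b.
Proof. lra. Qed.

Local Notation F := (exp_pair Cp Cm a b).
Local Notation z := (exp_pair_root Cp Cm a b).

Let sign_right := exp_pair_sign_right Cp Cm a b hCp hCm ha hb hab.
Let sign_left := exp_pair_sign_left Cp Cm a b hCp hCm ha hb hab.

Lemma high_pair_increasing : strictly_increasing_on (F 0) (fun k => k <= z 1).
Proof.
  apply (strictly_increasing_of_derive _ (F 1)); [apply is_derive_exp_pair|].
  intros x y c _ Hy Hc; simpl in *.
  pose proof (sign_left 1 c ltac:(lra)) as Hsign; simpl in Hsign.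
  assert (a * (a - b) < 0) by nra; nra.
Qed.

Lemma high_pair_decreasing : strictly_decreasing_on (F 0) (fun k => z 1 <= k).
Proof.
  apply (strictly_decreasing_of_derive _ (F 1)); [apply is_derive_exp_pair|].
  intros x y c Hx _ Hc; simpl in *.
  pose proof (sign_right 1 c ltac:(lra)) as Hsign; simpl in Hsign.
  assert (a * (a - b) < 0) by nra; nra.
Qed.

Lemma high_pair_concave : strictly_concave_on (F 0) (fun k => k <= z 2).
Proof.
  apply (strictly_concave_of_decreasing_derive _ (F 1));
    [apply is_derive_exp_pair|intros x y w Hx Hw Hy; lra|].
  apply (strictly_decreasing_of_derive _ (F 2)); [apply is_derive_exp_pair|].
  intros x y c _ Hy Hc; simpl in *.
  pose proof (sign_left 2 c ltac:(lra)) as Hsign; simpl in Hsign.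
  assert (0 < a * (a * 1) * (a - b)) by (apply Rmult_lt_0_compat; nra); nra.
Qed.

Lemma high_pair_convex : strictly_convex_on (F 0) (fun k => z 2 <= k).
Proof.
  apply (strictly_convex_of_increasing_derive _ (F 1));
    [apply is_derive_exp_pair|intros x y w Hx Hw Hy; lra|].
  apply (strictly_increasing_of_derive _ (F 2)); [apply is_derive_exp_pair|].
  intros x y c Hx _ Hc; simpl in *.
  pose proof (sign_right 2 c ltac:(lra)) as Hsign; simpl in Hsign.
  assert (0 < a * (a * 1) * (a - b)) by (apply Rmult_lt_0_compat; nra); nra.
Qed.

Lemma high_pair_pos k : z 0 < k -> 0 < F 0 k.
Proof. intros Hk; pose proof (sign_right 0 k Hk); simpl in *; nra. Qed.

Lemma high_pair_neg k : k < z 0 -> F 0 k < 0.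
Proof. intros Hk; pose proof (sign_left 0 k Hk); simpl in *; nra. Qed.

Lemma high_pair_lim_m_infty : is_lim (F 0) m_infty m_infty.
Proof.
  apply (is_lim_ext (fun k => exp (k * b) * (Cp * exp (k * (a - b)) - Cm))).
  { intros k; unfold exp_pair; replace (k * a) with (k * b + k * (a - b)) by ring.
    rewrite exp_plus; simpl; ring. }
  replace m_infty with (Rbar_mult p_infty (Cp * 0 - Cm)) at 2
    by (apply is_Rbar_mult_unique, is_Rbar_mult_p_infty_neg; simpl; lra).
  apply is_lim_mult.
  - apply is_lim_exp_mul_p_infty, is_Rbar_mult_m_infty_neg; simpl; lra.
  - apply (is_lim_minus _ _ _ (Cp * 0) Cm);
      [apply (is_lim_scal_l _ Cp m_infty 0), is_lim_exp_mul_0, is_Rbar_mult_m_infty_pos;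
       simpl; lra
      |apply is_lim_const|reflexivity].
  - simpl; lra.
Qed.

Lemma high_pair_shape_exp_pair : high_pair_shape (F 0) (z 0) (z 1) (z 2).
Proof.
  split; [|split; [|split; [|split; [|split; [|split; [|split; [|split]]]]]]].
  - apply is_local_max_of_increasing_decreasing;
      [apply high_pair_increasing|apply high_pair_decreasing].
  - apply high_pair_increasing.
  - apply high_pair_decreasing.
  - apply high_pair_concave.
  - apply high_pair_convex.
  - apply high_pair_pos.
  - apply high_pair_neg.
  - apply (filterlim_at_right_of_is_lim _ p_infty); [apply is_lim_exp_pair_p_infty; assumption|].
    exists (z 0); apply high_pair_pos.
  - apply high_pair_lim_m_infty.
Qed.

End HighPair.

Theorem lemma1 (Cp Cm Tp Tm : R)
  (hCp : 0 < Cp) (hCm : 0 < Cm)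
  (hTp : 0 < Tp < 1) (hTm : 0 < Tm < 1) (hne : Tp <> Tm) :
  let P := pair_fun Cp Cm Tp Tm in
  (exists k0 k1 k2 : R,
     (forall k, P k = 0 <-> k = k0) /\
     (forall k, is_local_extremum P k <-> k = k1) /\
     (forall k, is_inflection_point P k <-> k = k2) /\
     k0 < k1 < k2 /\
     (Tm < Tp ->
        is_local_max P k1 /\
        strictly_increasing_on P (fun k => k <= k1) /\
        strictly_decreasing_on P (fun k => k1 <= k) /\
        strictly_concave_on P (fun k => k <= k2) /\
        strictly_convex_on P (fun k => k2 <= k) /\
        (forall k, k0 < k -> 0 < P k) /\
        (forall k, k < k0 -> P k < 0) /\
        filterlim P (Rbar_locally p_infty) (at_right 0) /\
        is_lim P m_infty m_infty) /\
     (Tp < Tm ->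
        is_local_min P k1 /\
        strictly_decreasing_on P (fun k => k <= k1) /\
        strictly_increasing_on P (fun k => k1 <= k) /\
        strictly_convex_on P (fun k => k <= k2) /\
        strictly_concave_on P (fun k => k2 <= k) /\
        (forall k, k0 < k -> P k < 0) /\
        filterlim P (Rbar_locally p_infty) (at_left 0) /\
        is_lim P m_infty p_infty)) /\
  (forall n : nat, (1 <= n)%nat -> exists! k : R, Derive_n P n k = 0).
Proof.
  intros P.
  pose proof (ln_lt_0 Tp hTp) as ha; pose proof (ln_lt_0 Tm hTm) as hb.
  assert (hab : ln Tp <> ln Tm) by (intros E; apply hne, ln_inv; lra).
  assert (HP : P = exp_pair Cp Cm (ln Tp) (ln Tm) 0) by apply pair_fun_exp_pair.
  split; [|intros n _; rewrite HP; apply Derive_n_exp_pair_unique_zero; assumption].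
  set (z := exp_pair_root Cp Cm (ln Tp) (ln Tm)).
  exists (z 0%nat), (z 1%nat), (z 2%nat).
  pose proof (exp_pair_root_lt_succ Cp Cm (ln Tp) (ln Tm) hCp hCm ha hb hab) as Hlt.
  split; [intros k; rewrite HP; apply exp_pair_eq_0_iff; assumption|].
  destruct (Rdichotomy _ _ hne) as [Hlow|Hhigh].
  - pose proof (high_pair_shape_exp_pair Cm Cp (ln Tm) (ln Tp) hCm hCp
                  (ln_increasing _ _ (proj1 hTp) Hlow) hb) as Hshape.
    rewrite !(exp_pair_root_swap Cp Cm (ln Tp) (ln Tm) hCp hCm ha hb hab) in Hshape.
    destruct (high_pair_shape_critical_points _ _ _ _ Hshape) as [Hext Hinfl].
    rewrite HP, exp_pair_opp_swap; split; [|split; [|split; [|split]]].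
    + intros k; rewrite is_local_extremum_opp; apply Hext.
    + intros k; rewrite is_inflection_point_opp; apply Hinfl.
    + split; [apply (Hlt 0%nat)|apply (Hlt 1%nat)].
    + intros Hhigh; lra.
    + intros _; apply low_pair_shape_opp, Hshape.
  - pose proof (high_pair_shape_exp_pair Cp Cm (ln Tp) (ln Tm) hCp hCm
                  (ln_increasing _ _ (proj1 hTm) Hhigh) ha) as Hshape.
    destruct (high_pair_shape_critical_points _ _ _ _ Hshape) as [Hext Hinfl].
    rewrite HP; split; [|split; [|split; [|split]]].
    + exact Hext.
    + exact Hinfl.
    + split; [apply (Hlt 0%nat)|apply (Hlt 1%nat)].
    + intros _; exact Hshape.
    + intros Hlow; lra.
Qed.
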